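(* Let $\mathbf V$ be a monoid variety satisfying the identities $xtx\approx xtx^2\approx x^2tx$. If $\mathbf A^1\not\subseteq\mathbf V$, then $\mathbf V$ satisfies $xy^2tx\approx(xy)^2tx$.
   Context: $A=\langle a,b,c\mid a^2=a,\ b^2=b,\ ab=ca=0,\ ac=cb=c\rangle=\{a,b,c,ba,bc,0\}$, $A^1$ is $A$ with a new identity element adjoined, and $\mathbf A^1$ is the monoid variety generated by $A^1$. *)

From mathcomp Require Import all_boot.
Set Implicit Arguments. Unset Strict Implicit. Unset Printing Implicit Defensive.

Record monoid := Monoid {
  carrier :> Type;
  mop : carrier -> carrier -> carrier;
  munit : carrier;
  massoc : forall x y z, mop x (mop y z) = mop (mop x y) z;
  mid_l : forall x, mop munit x = x;
  mid_r : forall x, mop x munit = x }.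

Definition word := seq nat.
Definition identity := (word * word)%type.

Definition eval (M : monoid) (e : nat -> M) (w : word) : M :=
  foldr (fun x acc => mop (e x) acc) (munit M) w.

Definition satisfies (M : monoid) (i : identity) : Prop :=
  forall e : nat -> M, eval e i.1 = eval e i.2.

(** A monoid variety is the class of all monoids satisfying a set of
    identities [Sigma] (Birkhoff).  [in_variety Sigma M] : M belongs to it. *)
Definition in_variety (Sigma : identity -> Prop) (M : monoid) : Prop :=
  forall i, Sigma i -> satisfies M i.

Definition variety_satisfies (Sigma : identity -> Prop) (i : identity) : Prop :=
  forall M : monoid, in_variety Sigma M -> satisfies M i.

Definition in_generated_variety (M N : monoid) : Prop :=
  forall i, satisfies M i -> satisfies N i.

Definition gen_variety_subset (M : monoid) (Sigma : identity -> Prop) : Prop :=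
  forall N : monoid, in_generated_variety M N -> in_variety Sigma N.

(** The semigroup A = <a,b,c | a^2=a, b^2=b, ab=ca=0, ac=cb=c>
    = {a,b,c,ba,bc,0}, with an identity adjoined: A^1. *)
Inductive A1 := E1 | Ea | Eb | Ec | Eba | Ebc | E0.

Definition A1mul (x y : A1) : A1 :=
  match x, y with
  | E1, _ => y
  | _, E1 => x
  | E0, _ => E0
  | _, E0 => E0
  | Ea, Ea => Ea | Ea, Eb => E0 | Ea, Ec => Ec | Ea, Eba => E0 | Ea, Ebc => E0
  | Eb, Ea => Eba | Eb, Eb => Eb | Eb, Ec => Ebc | Eb, Eba => Eba | Eb, Ebc => Ebc
  | Ec, Ea => E0 | Ec, Eb => Ec | Ec, Ec => E0 | Ec, Eba => E0 | Ec, Ebc => E0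
  | Eba, Ea => Eba | Eba, Eb => E0 | Eba, Ec => Ebc | Eba, Eba => E0 | Eba, Ebc => E0
  | Ebc, Ea => E0 | Ebc, Eb => Ebc | Ebc, Ec => E0 | Ebc, Eba => E0 | Ebc, Ebc => E0
  end.

Lemma A1mul_assoc x y z : A1mul x (A1mul y z) = A1mul (A1mul x y) z.
Proof. by case: x; case: y; case: z. Qed.
Lemma A1mul1x x : A1mul E1 x = x. Proof. by []. Qed.
Lemma A1mulx1 x : A1mul x E1 = x. Proof. by case: x. Qed.

Definition A1_monoid : monoid := Monoid A1mul_assoc A1mul1x A1mulx1.

From mathcomp Require Import all_boot.
From Stdlib Require Import Classical.
Set Implicit Arguments. Unset Strict Implicit. Unset Printing Implicit Defensive.

(* Some identity of the variety fails in A^1.  Substituting for its letters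
   words in the generators a, b, c of A^1 and multiplying both sides by
   suitable elements (bc is separated from 0 by two-sided multiplications),
   the variety satisfies an identity U ~ V over {a, b, c} with U = bc and
   V = 0 in A^1.  The substitution c |-> x gives x ~ x^k, k the number of c's
   in V, which makes the variety idempotent unless k = 1.  If k = 1, write
   V = V1 c V2.  Either V2 contains a, and a |-> e, b |-> 1, c |-> et gives
   et ~ ete for idempotent e; or V2 is a power of b, so V1 = 0 in A^1 contains
   the factor ab, and a |-> f, b |-> e, c |-> fte gives efte ~ (ef)^2 te for
   idempotents e, f.  Either way xy^2tx ~ (xy)^2tx holds for idempotent x, y,
   and xtx ~ x^2tx^2 extends it to all x, y. *)

Local Notation "x ** y" := (mop x y) (at level 41, right associativity).

Definition evw (M : monoid) (T : Type) (f : T -> M) (w : seq T) : M :=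
  foldr (fun x acc => f x ** acc) (munit M) w.

Definition satisfies_on (M : monoid) (T : Type) (U V : seq T) : Prop :=
  forall f : T -> M, evw f U = evw f V.

Definition mpow (M : monoid) (x : M) (n : nat) : M := iter n (mop x) (munit M).

Section Evaluation.
Variable M : monoid.

Lemma evw_cat (T : Type) (f : T -> M) s1 s2 : evw f (s1 ++ s2) = evw f s1 ** evw f s2.
Proof. by elim: s1 => [|x s1 IH] /=; rewrite ?mid_l // IH massoc. Qed.

Lemma evw_flatten_map (S T : Type) (f : T -> M) (g : S -> seq T) w :
  evw f (flatten (map g w)) = evw (fun x => evw f (g x)) w.
Proof. by elim: w => [|x w IH] //=; rewrite evw_cat IH. Qed.

Lemma satisfies_subst (T : Type) (u v : word) (g : nat -> seq T) :
  satisfies M (u, v) -> satisfies_on M (flatten (map g u)) (flatten (map g v)).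
Proof. by move=> Muv f; rewrite !evw_flatten_map; apply: Muv. Qed.

Lemma mpowD (x : M) m n : mpow x (m + n) = mpow x m ** mpow x n.
Proof. by elim: m => [|m IH] /=; rewrite ?mid_l // IH massoc. Qed.

End Evaluation.

Lemma not_gen_variety_subset (M : monoid) (Sigma : identity -> Prop) :
  ~ gen_variety_subset M Sigma -> exists2 i, Sigma i & ~ satisfies M i.
Proof.
move=> notsub; apply: NNPP => none; apply: notsub => N MN i Si; apply: MN.
by apply: NNPP => Mi; apply: none; exists i.
Qed.

Lemma A1_separate (x y : A1) : x <> y -> exists p s,
  (A1mul p (A1mul x s) = Ebc /\ A1mul p (A1mul y s) = E0) \/
  (A1mul p (A1mul x s) = E0 /\ A1mul p (A1mul y s) = Ebc).
Proof.
case: x; case: y => // _; solve [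
  (exists E1 + exists Ea + exists Eb + exists Ec + exists Eba + exists Ebc + exists E0);
  (exists E1 + exists Ea + exists Eb + exists Ec + exists Eba + exists Ebc + exists E0);
  (left + right); split; reflexivity].
Qed.

Inductive gen := ga | gb | gc.

Definition is_a (l : gen) : bool := if l is ga then true else false.
Definition is_c (l : gen) : bool := if l is gc then true else false.

Definition genA (l : gen) : A1 := match l with ga => Ea | gb => Eb | gc => Ec end.

Definition evA (w : seq gen) : A1 := evw (M := A1_monoid) genA w.

Definition subst3 (M : monoid) (p q r : M) (l : gen) : M :=
  match l with ga => p | gb => q | gc => r end.

Definition nf (x : A1) : seq gen :=
  match x with
  | E1 => [::] | Ea => [:: ga] | Eb => [:: gb] | Ec => [:: gc]
  | Eba => [:: gb; ga] | Ebc => [:: gb; gc] | E0 => [:: gc; gc]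
  end.

Lemma evA_cons l w : evA (l :: w) = A1mul (genA l) (evA w).
Proof. by []. Qed.

Lemma evA_cat w1 w2 : evA (w1 ++ w2) = A1mul (evA w1) (evA w2).
Proof. exact: (@evw_cat A1_monoid). Qed.

Lemma evA_nf x : evA (nf x) = x.
Proof. by case: x. Qed.

Lemma evA_flatten_nf (e : nat -> A1) w :
  evA (flatten (map (fun n => nf (e n)) w)) = eval (M := A1_monoid) e w.
Proof. by elim: w => //= n w IH; rewrite evA_cat IH evA_nf. Qed.

Lemma evw_nf (M : monoid) (p q r : M) :
  p ** p = p -> q ** q = q -> p ** r = r -> r ** q = r ->
  forall w, evA w <> E0 -> evw (subst3 p q r) w = evw (subst3 p q r) (nf (evA w)).
Proof.
move=> pp qq pr rq; elim=> [|l w IH] //; rewrite evA_cons => nz.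
have nzw : evA w <> E0 by move=> w0; apply: nz; rewrite w0; case: l.
rewrite /= IH //; move: nz; case: l; case: (evA w) => //= nz;
  try by [exfalso; apply: nz]; by rewrite ?mid_r ?massoc ?pp ?qq ?pr ?rq.
Qed.

Lemma evA_cfree_neq_c w : ~~ has is_c w -> evA w <> Ec /\ evA w <> Ebc.
Proof.
elim: w => [|l w IH] // /norP [cl /IH [wc wbc]]; rewrite evA_cons.
by move: cl wc wbc; case: l; case: (evA w).
Qed.

Lemma mul_c_evA_bword w : ~~ has is_c w -> ~~ has is_a w -> A1mul Ec (evA w) = Ec.
Proof.
elim: w => [|l w IH] // /norP [cl cw] /norP [al aw].
by case: l cl al => // _ _; rewrite evA_cons A1mul_assoc [A1mul Ec (genA gb)]/= IH.
Qed.

Lemma evA_cfree_eq0_factor w :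
  ~~ has is_c w -> evA w = E0 -> exists w1 w2, w = w1 ++ ga :: gb :: w2.
Proof.
elim: w => [|l w IH] // /norP [cl cw]; rewrite evA_cons.
have [wc wbc] := evA_cfree_neq_c cw.
case ew: (evA w) wc wbc => // _ _ lw; last first.
  by have [w1 [w2 ->]] := IH cw ew; exists (l :: w1), w2.
all: case: l cl lw => // _ _; exists [::]; clear IH.
all: case: w cw ew => [|[] w] // _; rewrite evA_cons.
all: first [by exists w | by case: (evA w)].
Qed.

Lemma split_single_c V : count is_c V = 1 ->
  exists V1 V2, [/\ V = V1 ++ gc :: V2, ~~ has is_c V1 & ~~ has is_c V2].
Proof.
elim: V => [|l V IH] //; case: l => /=.
- by move=> /IH [V1 [V2 [-> c1 c2]]]; exists (ga :: V1), V2.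
- by move=> /IH [V1 [V2 [-> c1 c2]]]; exists (gb :: V1), V2.
- by rewrite add1n => -[c0]; exists [::], V; split=> //; rewrite has_count c0.
Qed.

Lemma evw_subst_count (M : monoid) (x : M) w :
  evw (subst3 (munit M) (munit M) x) w = mpow x (count is_c w).
Proof. by elim: w => [|[] w IH] //=; rewrite ?mid_l IH. Qed.

Lemma evw_subst_cfree (M : monoid) (e r : M) w : e ** e = e -> ~~ has is_c w ->
  evw (subst3 e (munit M) r) w = if has is_a w then e else munit M.
Proof.
move=> ee; elim: w => [|[] w IH] //= /IH ->; rewrite ?mid_l //.
by case: (has is_a w); rewrite ?ee ?mid_r.
Qed.

Lemma evw_absorb (M : monoid) (p e r : M) w : r ** e = r ->
  ~~ has is_c w -> ~~ has is_a w -> r ** evw (subst3 p e r) w = r.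
Proof.
move=> re; elim: w => [|[] w IH] //=; first by rewrite mid_r.
by move=> cw aw; rewrite massoc re IH.
Qed.

Lemma evw_sandwich (M : monoid) (e f r : M) w :
  e ** e = e -> f ** f = f -> ~~ has is_c w ->
  (exists n, e ** evw (subst3 f e r) w ** f = mpow (e ** f) n.+1) /\
  (exists n, f ** evw (subst3 f e r) w ** f = f ** mpow (e ** f) n).
Proof.
move=> ee ff; elim: w => [|l w IH] /=.
  by split; [exists 0 | exists 0]; rewrite /= !mid_l ?mid_r.
case: l => //= /IH [[n en] [m fm]]; rewrite -!massoc; split.
- by exists m; rewrite fm massoc.
- by exists m; rewrite massoc ff fm.
- by exists n; rewrite massoc ee en.
- by exists n.+1; rewrite en.
Qed.

Lemma evw_Ebc (M : monoid) (p q r : M) U :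
  p ** p = p -> q ** q = q -> p ** r = r -> r ** q = r -> evA U = Ebc ->
  evw (subst3 p q r) U = q ** r.
Proof. by move=> pp qq pr rq U_bc; rewrite evw_nf ?U_bc //= mid_r. Qed.

Definition idem_xy2tx (M : monoid) : Prop :=
  forall e f t : M, e ** e = e -> f ** f = f ->
  e ** f ** t ** e = e ** f ** e ** f ** t ** e.

Lemma idem_xy2tx_of_idempotent (M : monoid) : (forall x : M, x ** x = x) -> idem_xy2tx M.
Proof.
move=> xx e f t _ _.
have -> : e ** f ** e ** f ** t ** e = ((e ** f) ** (e ** f)) ** t ** e.
  by rewrite -!massoc.
by rewrite xx -massoc.
Qed.

Lemma idem_xy2tx_of_ete (M : monoid) :
  (forall e t : M, e ** e = e -> e ** t ** e = e ** t) -> idem_xy2tx M.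
Proof.
move=> ete e f t ee ff.
have ete_s u s : e ** u ** e ** s = e ** u ** s.
  by have := congr1 (fun a => a ** s) (ete e u ee); rewrite -!massoc.
have := ete e (f ** t) ee; rewrite -!massoc => ->.
by rewrite ete_s [f ** f ** t]massoc ff.
Qed.

Lemma ete_of_a_in_suffix (M : monoid) U V1 V2 :
  satisfies_on M U (V1 ++ gc :: V2) -> evA U = Ebc ->
  ~~ has is_c V1 -> ~~ has is_c V2 -> has is_a V2 ->
  forall e t : M, e ** e = e -> e ** t ** e = e ** t.
Proof.
move=> MUV U_bc c1 c2 a2 e t ee.
have := MUV (subst3 e (munit M) (e ** t)).
have ee_s s : e ** e ** s = e ** s by rewrite massoc ee.
rewrite (evw_Ebc ee (mid_l _) (ee_s t) (mid_r _) U_bc) mid_l.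
rewrite evw_cat [evw _ (gc :: _)]/= !evw_subst_cfree // a2 => ->.
by case: (has is_a V1); rewrite ?mid_l -!massoc ?ee_s.
Qed.

Section SquareLaws.
Variable M : monoid.
Hypotheses (sq_right : forall x t : M, x ** t ** x = x ** t ** x ** x)
           (sq_left : forall x t : M, x ** t ** x = x ** x ** t ** x).

Lemma sq_cube (x : M) : x ** x = x ** x ** x.
Proof. by have := sq_right x (munit M); rewrite !mid_l. Qed.

Lemma sq_idem (x : M) : (x ** x) ** (x ** x) = x ** x.
Proof. by rewrite -massoc -!sq_cube. Qed.

Lemma mpow_gt1 (x : M) n : mpow x n.+2 = x ** x.
Proof.
elim: n => [|n IH]; first by rewrite /= mid_r.
by rewrite -[LHS]/(x ** mpow x n.+2) IH -sq_cube.
Qed.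

Lemma ends_sq (x t : M) : x ** t ** x = x ** x ** t ** x ** x.
Proof. by rewrite sq_left; have := sq_right x (x ** t); rewrite -!massoc. Qed.

Lemma ends_sq_tail (x t s : M) : x ** t ** x ** s = x ** x ** t ** x ** x ** s.
Proof. by have := congr1 (fun a => a ** s) (ends_sq x t); rewrite -!massoc. Qed.

Lemma sq_right_tail (x t s : M) : x ** t ** x ** s = x ** t ** x ** x ** s.
Proof. by have := congr1 (fun a => a ** s) (sq_right x t); rewrite -!massoc. Qed.

Lemma xy2tx_of_idem_xy2tx : idem_xy2tx M ->
  forall x y t : M, x ** y ** y ** t ** x = x ** y ** x ** y ** t ** x.
Proof.
move=> law x y t.
have -> : x ** y ** y ** t ** x = (x ** x) ** (y ** y) ** t ** (x ** x).
  by have := ends_sq x (y ** y ** t); rewrite -!massoc.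
have -> : x ** y ** x ** y ** t ** x =
          (x ** x) ** (y ** y) ** (x ** x) ** (y ** y) ** t ** (x ** x).
  rewrite (ends_sq_tail y x); have := ends_sq x (y ** y ** x ** y ** y ** t).
  rewrite -!massoc => ->.
  by have := sq_right_tail x (y ** y) (y ** y ** t ** x ** x); rewrite -!massoc => ->.
exact: law (sq_idem x) (sq_idem y).
Qed.

Lemma sandwich_evA0 (e f r : M) w : e ** e = e -> f ** f = f ->
  ~~ has is_c w -> evA w = E0 -> e ** evw (subst3 f e r) w ** f = (e ** f) ** (e ** f).
Proof.
move=> ee ff cw /(evA_cfree_eq0_factor cw) [w1 [w2 Ew]].
move: cw; rewrite Ew has_cat => /norP [c1 /norP [_ c2]].
have [[n En] _] := evw_sandwich r ee ff c1.
have [[m Em] _] := evw_sandwich r ee ff c2.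
rewrite evw_cat /=.
have -> : e ** (evw (subst3 f e r) w1 ** f ** e ** evw (subst3 f e r) w2) ** f =
          (e ** evw (subst3 f e r) w1 ** f) ** (e ** evw (subst3 f e r) w2 ** f).
  by rewrite -!massoc.
by rewrite En Em -mpowD addSn addnS mpow_gt1.
Qed.

Lemma idem_xy2tx_of_bword_suffix U V1 V2 :
  satisfies_on M U (V1 ++ gc :: V2) -> evA U = Ebc -> evA (V1 ++ gc :: V2) = E0 ->
  ~~ has is_c V1 -> ~~ has is_c V2 -> ~~ has is_a V2 -> idem_xy2tx M.
Proof.
move=> MUV U_bc V_0 c1 c2 a2 e f t ee ff.
have V1_0 : evA V1 = E0.
  move: V_0; rewrite evA_cat evA_cons mul_c_evA_bword //.
  by have [] := evA_cfree_neq_c c1; case: (evA V1).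
have ee_s s : e ** e ** s = e ** s by rewrite massoc ee.
have ff_s s : f ** f ** s = f ** s by rewrite massoc ff.
have fte_e : (f ** t ** e) ** e = f ** t ** e by rewrite -!massoc ee.
have := MUV (subst3 f e (f ** t ** e)).
rewrite (evw_Ebc ff ee (ff_s _) fte_e U_bc) evw_cat /= evw_absorb //.
move=> /(congr1 (mop e)); rewrite ee_s => {1}->.
have := congr1 (fun a => a ** t ** e) (sandwich_evA0 (f ** t ** e) ee ff c1 V1_0).
by rewrite -!massoc.
Qed.

Lemma idem_xy2tx_of_separated U V :
  satisfies_on M U V -> evA U = Ebc -> evA V = E0 -> idem_xy2tx M.
Proof.
move=> MUV U_bc V_0.
have pow_c (x : M) : x = mpow x (count is_c V).
  have := MUV (subst3 (munit M) (munit M) x).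
  by rewrite (evw_Ebc (mid_l _) (mid_l _) (mid_l _) (mid_r _) U_bc) mid_l evw_subst_count.
case cV: (count is_c V) pow_c => [|[|n]] pow_c.
- by apply: idem_xy2tx_of_idempotent => x; rewrite (pow_c x) mid_l.
- have [V1 [V2 [EV c1 c2]]] := split_single_c cV; subst V.
  have [a2|a2] := boolP (has is_a V2).
    exact/idem_xy2tx_of_ete/(ete_of_a_in_suffix MUV).
  exact: idem_xy2tx_of_bword_suffix MUV U_bc V_0 c1 c2 a2.
- by apply: idem_xy2tx_of_idempotent => x; rewrite -(mpow_gt1 x n) -pow_c.
Qed.

Lemma idem_xy2tx_of_distinct U V : satisfies_on M U V -> evA U <> evA V -> idem_xy2tx M.
Proof.
move=> MUV /A1_separate [p [s sep]].
pose ctx W := nf p ++ W ++ nf s.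
have M_ctx : satisfies_on M (ctx U) (ctx V) by move=> f; rewrite !evw_cat MUV.
have evA_ctx W : evA (ctx W) = A1mul p (A1mul (evA W) s) by rewrite !evA_cat !evA_nf.
case: sep => [[U_bc V_0]|[U_0 V_bc]].
- by apply: (idem_xy2tx_of_separated M_ctx); rewrite evA_ctx.
- by apply: (idem_xy2tx_of_separated (fun f => esym (M_ctx f))); rewrite evA_ctx.
Qed.

End SquareLaws.

Theorem lemma4p5 (Sigma : identity -> Prop) :
  variety_satisfies Sigma ([:: 0; 2; 0], [:: 0; 2; 0; 0]) ->
  variety_satisfies Sigma ([:: 0; 2; 0], [:: 0; 0; 2; 0]) ->
  ~ gen_variety_subset A1_monoid Sigma ->
  variety_satisfies Sigma ([:: 0; 1; 1; 2; 0], [:: 0; 1; 0; 1; 2; 0]).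
Proof.
move=> xtx_r xtx_l /not_gen_variety_subset [[u v] Su A1_fails] M MV.
have sq_r (x t : M) : x ** t ** x = x ** t ** x ** x.
  by have := xtx_r M MV (fun n => if n is 0 then x else t); rewrite /= !mid_r.
have sq_l (x t : M) : x ** t ** x = x ** x ** t ** x.
  by have := xtx_l M MV (fun n => if n is 0 then x else t); rewrite /= !mid_r.
have [e fails] := not_all_ex_not _ _ A1_fails.
have law : idem_xy2tx M.
  apply: (idem_xy2tx_of_distinct sq_r (satisfies_subst (fun n => nf (e n)) (MV _ Su))).
  by rewrite !evA_flatten_nf.
by move=> f /=; rewrite !mid_r; apply: xy2tx_of_idem_xy2tx.
Qed.
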